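(* Fix $L\in\mathbb Z$ and work on $Y_L=\mathbb R\times(0,2^L]\times\mathbb R$ with the objects described in the context. The function $\mathcal C(A)=\mathcal M(\mathcal N(\mathcal Q(A)))$, $A\subseteq Y_L$, with $\mathcal E=\mathcal D_L$, is a $\mu$-covering function with parameter $\Phi$ for every $\Phi\ge2$.
   Context: Dyadic intervals $I(m,l)=(2^lm,2^l(m+1)]$; tiles $H(m,l,n)=I(m,l)\times(2^{l-1},2^l]\times I(n,-l)$. $\mathcal D_L$ = strips $D(m,l)=I(m,l)\times(0,2^l]\times\mathbb R$ with $l\le L$, $\sigma(D(m,l))=2^l$. $\mathcal T_L$ = trees $T(m,l,n)=\bigcup_{l'\le l}\bigcup_{m':\,I(m',l')\subseteq I(m,l)}H(m',l',N(n,l'))$ with $l\le L$ ($N(n,l')$ the integer with $I(n,-l)\subseteq I(N(n,l'),-l')$), $\tau(T(m,l,n))=2^l$. Outer measures on $Y_L$: $\mu(A)=\inf\{\sum_{S\in\mathcal S'}\sigma(S):\mathcal S'\subseteq\mathcal D_L,A\subseteq\bigcup\mathcal S'\}$, $\nu$ likewise from $(\mathcal T_L,\tau)$. $\pi$ = projection onto first coordinate, $|\cdot|$ Lebesgue measure. For $E\in\mathcal D_L$, $E_+=\{(x,s,\xi)\in E:s>\sigma(E)/2\}$. $\mathcal Q(A)=\{E\in\mathcal D_L:E_+\cap A\ne\varnothing\}$. For $\mathcal D_1\subseteq\mathcal D_L$: $\mathcal N(\mathcal D_1)=\{E\in\mathcal D_L:|\pi(E)\cap\pi(\bigcup\mathcal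 D_1)|\ge|\pi(E)|/2\}$, and $\mathcal M(\mathcal D_1)$ is the subcollection of elements of $\mathcal D_1$ maximal with respect to inclusion. A $\mu$-covering function with parameter $\Phi$: a map $\mathcal C$ assigning to each $A$ a subcollection of pairwise disjoint elements of $\mathcal E$ such that $\mathbf B_{\mathcal C}(A)=\bigcup_{E\in\mathcal C(A)}E$ satisfies $A\subseteq\mathbf B_{\mathcal C}(A)$, $\mu(\mathbf B_{\mathcal C}(A))\le\Phi\mu(A)$, and $A_1\subseteq A_2\Rightarrow\mathbf B_{\mathcal C}(A_1)\subseteq\mathbf B_{\mathcal C}(A_2)$. *)

From HB Require Import structures.
From mathcomp Require Import all_boot all_order all_algebra.
From mathcomp Require Import all_classical all_reals all_analysis.
Set Implicit Arguments. Unset Strict Implicit. Unset Printing Implicit Defensive.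
Import Order.TTheory GRing.Theory Num.Theory.
Local Open Scope classical_set_scope.
Local Open Scope ring_scope.

Section Defs.
Variable R : realType.

(* points (x, s, xi) of R x R x R *)
Definition pt := (R * R * R)%type.

Definition YL (L : int) : set pt :=
  [set p | 0 < p.1.2 /\ p.1.2 <= (2%:R : R) ^ L].

Definition dyI (m l : int) : set R :=
  `](2%:R ^ l * m%:~R), (2%:R ^ l * (m + 1)%:~R)].

Definition strip (i : int * int) : set pt :=
  [set p | dyI i.1 i.2 p.1.1 /\ 0 < p.1.2 /\ p.1.2 <= (2%:R : R) ^ i.2].

Definition sigma (i : int * int) : R := 2%:R ^ i.2.

(* the collection D_L (as a set of indices) *)
Definition DL (L : int) : set (int * int) := [set i | (i.2 <= L)%R].

Definition bigstrip (S : set (int * int)) : set pt := \bigcup_(i in S) strip i.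

Definition mu (L : int) (A : set pt) : \bar R :=
  ereal_inf [set (\esum_(i in S) (sigma i)%:E)%E | S in
     [set S | S `<=` DL L /\ A `<=` bigstrip S]].

Definition proj1set (A : set pt) : set R := (fun p : pt => p.1.1) @` A.

Definition strip_plus (i : int * int) : set pt :=
  [set p | strip i p /\ sigma i / 2%:R < p.1.2].

Definition Qc (L : int) (A : set pt) : set (int * int) :=
  [set i | DL L i /\ strip_plus i `&` A !=set0].

Definition Nc (L : int) (D1 : set (int * int)) : set (int * int) :=
  [set i | DL L i /\
    (lebesgue_measure (proj1set (strip i)) * (2%:R^-1)%:E <=
     lebesgue_measure (proj1set (strip i) `&` proj1set (bigstrip D1)))%E].

Definition Mc (D1 : set (int * int)) : set (int * int) :=
  [set i | D1 i /\ forall j, D1 j -> strip i `<=` strip j -> strip i = strip j].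

Definition mu_covering_function (L : int) (C : set pt -> set (int * int)) (Phi : R) :=
  (forall A, A `<=` YL L ->
     [/\ C A `<=` DL L,
         (forall i j, C A i -> C A j -> strip i <> strip j ->
            strip i `&` strip j = set0),
         A `<=` bigstrip (C A) &
         (mu L (bigstrip (C A)) <= Phi%:E * mu L A)%E]) /\
  (forall A1 A2, A1 `<=` YL L -> A2 `<=` YL L -> A1 `<=` A2 ->
     bigstrip (C A1) `<=` bigstrip (C A2)).

End Defs.

From HB Require Import structures.
From mathcomp Require Import all_boot all_order all_algebra.
From mathcomp Require Import all_classical all_reals all_analysis.
From mathcomp Require Import zify ring lra.
Set Implicit Arguments. Unset Strict Implicit. Unset Printing Implicit Defensive.
Import Order.TTheory GRing.Theory Num.Theory.
Local Open Scope classical_set_scope.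
Local Open Scope ring_scope.

(* A point (x, s, xi) of Y_L lies in the upper half of the strip D(m, l) with
   2^(l-1) < s <= 2^l and x in I(m, l), so Q(A) covers A.  Since Q(A) is
   contained in N(Q(A)) and all levels are at most L, every strip of N(Q(A))
   lies in a maximal one; this gives the covering property and, N and Q being
   monotone, the monotonicity.  Dyadic intervals are nested or disjoint, so
   the maximal strips have pairwise disjoint projections.  With U the
   projection of the union of Q(A), every E in N(Q(A)) has
   sigma(E) = |pi(E)| <= 2 |pi(E) ∩ U|, hence the maximal strips have total
   size at most 2 |U|.  Finally |U| <= mu(A): a strip of a cover of A that
   contains a point of A lying in the upper half of a strip of Q(A) is at
   least as high as that strip, hence contains its projection. *)

Section DyadicIntervals.
Variable R : realType.
Local Notation p2 l := ((2%:R : R) ^ l).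
Local Notation dI := (@dyI R).

Lemma p2_gt0 (l : int) : 0 < p2 l.
Proof. exact: exprz_gt0. Qed.

Lemma p2_le (l l' : int) : (p2 l <= p2 l') = (l <= l').
Proof. by rewrite ler_eXz2l // ltr1n. Qed.

Lemma p2_lt (l l' : int) : (p2 l < p2 l') = (l < l').
Proof. by rewrite ltr_eXz2l // ltr1n. Qed.

Lemma p2_subr1 (l : int) : p2 (l - 1) = p2 l / 2%:R.
Proof. by rewrite expfzDr ?pnatr_eq0 // -invr_expz expr1z. Qed.

Lemma p2_addn (l : int) (n : nat) : p2 (l + n%:Z) = p2 l * (2 ^ n)%:R.
Proof. by rewrite expfzDr ?pnatr_eq0 // natrX. Qed.

Lemma dyIP (m l : int) (x : R) :
  dI m l x <-> p2 l * m%:~R < x /\ x <= p2 l * (m + 1)%:~R.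
Proof. by rewrite /dyI /= in_itv /=; split => [/andP|[-> ->]]. Qed.

Lemma dyI_sup (m l : int) : dI m l (p2 l * (m + 1)%:~R).
Proof. by apply/dyIP; rewrite ltr_pM2l ?p2_gt0 // ltr_int ltzD1. Qed.

Lemma dyI_exists (l : int) (x : R) : exists m, dI m l x.
Proof.
exists (Num.ceil (x / p2 l) - 1); apply/dyIP; rewrite addrNK !(mulrC (p2 l)).
rewrite -ltr_pdivlMr ?p2_gt0 // -ler_pdivrMr ?p2_gt0 //.
by have /andP[] := ceil_itv (x / p2 l).
Qed.

Lemma dyI_inj (m m' l : int) : dI m l `<=` dI m' l -> m = m'.
Proof.
move=> /(_ _ (dyI_sup m l)) /dyIP[].
by rewrite ltr_pM2l ?ler_pM2l ?p2_gt0 // ltr_int ler_int; lia.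
Qed.

(* After rescaling by 2^l the coarser interval has the integer endpoints
   N m' and N (m' + 1), with N = 2^(l' - l). *)
Lemma dyI_nested (m l m' l' : int) (x : R) : l <= l' ->
  dI m l x -> dI m' l' x -> dI m l `<=` dI m' l'.
Proof.
move=> hl; have [n ->] : exists n : nat, l' = l + n%:Z by exists `|l' - l|%N; lia.
have e k : p2 (l + n%:Z) * k%:~R = p2 l * ((2 ^ n)%:Z * k)%:~R.
  by rewrite p2_addn -mulrA intrM.
move=> /dyIP[xm1 xm2] /dyIP[]; rewrite !e => h1 h2.
have hp := p2_gt0 l.
have lo : ((2 ^ n)%:Z * m' <= m)%R.
  by rewrite -ltzD1 -(ltr_int R) -(ltr_pM2l hp); apply: lt_le_trans xm2.
have hi : (m + 1 <= (2 ^ n)%:Z * (m' + 1))%R.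
  by rewrite -ltzD1 -(ltr_int R) -(ltr_pM2l hp) intrD; lra.
move=> y /dyIP[y1 y2]; apply/dyIP; rewrite !e; split.
  by apply: le_lt_trans y1; rewrite ler_pM2l // ler_int.
by apply: le_trans y2 _; rewrite ler_pM2l // ler_int.
Qed.

Lemma measurable_dyI (m l : int) : measurable (dI m l).
Proof. exact: measurable_itv. Qed.

Lemma lebesgue_measure_dyI (m l : int) : lebesgue_measure (dI m l) = (p2 l)%:E.
Proof.
rewrite lebesgue_measure_itv /= ifT.
  by rewrite -EFinB; congr EFin; rewrite intrD mulrDr; ring.
by rewrite lte_fin ltr_pM2l ?p2_gt0 // ltr_int ltzD1.
Qed.

End DyadicIntervals.

Section Strips.
Variable R : realType.
Local Notation p2 l := ((2%:R : R) ^ l).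
Local Notation dI := (@dyI R).
Local Notation st := (@strip R).

Lemma strip_subP (i j : int * int) :
  st i `<=` st j <-> i.2 <= j.2 /\ dI i.1 i.2 `<=` dI j.1 j.2.
Proof.
split=> [sij|[lij dij] p [hx [hs0 hs]]]; last first.
  by split; [exact: dij | split=> //; apply: le_trans hs _; rewrite p2_le].
have top y : dI i.1 i.2 y -> st i (y, p2 i.2, 0).
  by split=> //=; split=> //; exact: p2_gt0.
have [_ [_]] := sij _ (top _ (dyI_sup _ _ _)); rewrite p2_le => lij.
by split=> // y /top /sij[].
Qed.

Lemma strip_sub_level_lt (i j : int * int) :
  st i `<=` st j -> st i <> st j -> i.2 < j.2.
Proof.
case: i j => [m l] [m' l'] /strip_subP[/= lij dij] nij.
rewrite lt_neqAle lij andbT; apply/eqP => ell; apply: nij.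
by move: dij; rewrite -ell => /dyI_inj ->.
Qed.

Lemma strip_inj (i j : int * int) : st i = st j -> i = j.
Proof.
case: i j => [m l] [m' l'].
rewrite eqEsubset => -[/strip_subP[/= lij dij] /strip_subP[/= lji _]].
have ell : l = l' by apply/eqP; rewrite eq_le lij lji.
by move: dij; rewrite -ell => /dyI_inj ->.
Qed.

Lemma proj1set_strip (i : int * int) : proj1set (st i) = dI i.1 i.2.
Proof.
apply/seteqP; split=> [_ [p [hp _] <-] //|x hx].
by exists (x, p2 i.2, 0) => //; split=> //; split=> //; exact: p2_gt0.
Qed.

Lemma proj1set_bigstrip (D : set (int * int)) :
  proj1set (bigstrip D) = \bigcup_(j in D) dI j.1 j.2.
Proof.
rewrite /bigstrip /proj1set image_bigcup; apply: eq_bigcupr => j _.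
exact: proj1set_strip.
Qed.

End Strips.

Section MaximalStrips.
Variable R : realType.
Local Notation dI := (@dyI R).
Local Notation st := (@strip R).

Lemma not_Mc_above (D : set (int * int)) (i : int * int) : D i -> ~ Mc R D i ->
  exists2 j, D j & st i `<=` st j /\ i.2 < j.2.
Proof.
move=> Di nMi.
have /existsNP[j /not_implyP[Dj /not_implyP[sij nij]]] :
  ~ forall j, D j -> st i `<=` st j -> st i = st j by move=> maxi; exact: nMi.
by exists j => //; split; [exact: sij | exact: strip_sub_level_lt sij nij].
Qed.

Lemma Mc_exists_above (L : int) (D : set (int * int)) (i : int * int) :
  D `<=` DL L -> D i -> exists2 j, Mc R D j & st i `<=` st j.
Proof.
move=> DL_D; have [n] : exists n : nat, L - i.2 <= n%:Z by exists `|L - i.2|%N; lia.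
elim: n i => [|n IH] i hn Di;
  (have [Mi|/(not_Mc_above Di)[j Dj [sij lij]]] := pselect (Mc R D i);
     first by exists i);
  have := DL_D _ Dj; rewrite /DL /= => jL.
  lia.
have [|k Mk sjk] := IH j _ Dj; first lia.
by exists k => //; exact: subset_trans sjk.
Qed.

Lemma Mc_dyI_meet_eq (D : set (int * int)) (i j : int * int) :
  Mc R D i -> Mc R D j -> dI i.1 i.2 `&` dI j.1 j.2 !=set0 -> i = j.
Proof.
wlog lij : i j / i.2 <= j.2.
  move=> wlog Mi Mj mij; have [lij|/ltW lji] := leP i.2 j.2; first exact: wlog.
  by apply/esym/wlog => //; rewrite setIC.
move=> [Di maxi] [Dj _] [x [xi xj]]; apply/strip_inj/maxi => //.
by apply/strip_subP; split=> //; exact: dyI_nested xi xj.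
Qed.

End MaximalStrips.

Section CountableUnion.
Context d (T : measurableType d) (R : realType) (mu : {measure set T -> \bar R}).
Variables (I : countType) (F : I -> set T).

Let image_of_nat (S : set I) : S !=set0 ->
  exists2 e : nat -> I, S = e @` (pickle @` S) & set_inj (pickle @` S) e.
Proof.
move=> [i0 _]; exists (fun n => odflt i0 (unpickle n)).
  apply/seteqP; split=> [i Si|x [_ [i Si <-] <-]]; last by rewrite /= pickleK.
  by exists (pickle i); [exists i | rewrite /= pickleK].
by move=> _ _ /[!inE] -[i _ <-] [j _ <-]; rewrite /= !pickleK => /= ->.
Qed.

Lemma measurable_bigcup_countable (S : set I) :
  (forall i, S i -> measurable (F i)) -> measurable (\bigcup_(i in S) F i).
Proof.
move=> mF; have [->|/set0P/image_of_nat[e SE _]] := eqVneq S set0.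
  by rewrite bigcup_set0.
rewrite SE bigcup_image; apply: bigcup_measurable => n Pn.
by apply: mF; rewrite SE; exists n.
Qed.

Lemma measure_bigcup_countable (S : set I) :
  (forall i, S i -> measurable (F i)) -> trivIset S F ->
  mu (\bigcup_(i in S) F i) = (\esum_(i in S) mu (F i))%E.
Proof.
move=> mF tF; have [->|/set0P/image_of_nat[e SE einj]] := eqVneq S set0.
  by rewrite bigcup_set0 measure0 esum_set0.
rewrite SE bigcup_image esum_set_image //; apply: measure_bigcup.
  by move=> n Pn; apply: mF; rewrite SE; exists n.
move=> m n Pm Pn Fmn; apply: einj; rewrite ?inE //.
by apply: tF => //; rewrite SE; [exists m | exists n].
Qed.

Lemma measure_bigcup_countable_le (S : set I) :
  (forall i, S i -> measurable (F i)) ->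
  (mu (\bigcup_(i in S) F i) <= \esum_(i in S) mu (F i))%E.
Proof.
move=> mF; have [->|/set0P/image_of_nat[e SE einj]] := eqVneq S set0.
  by rewrite bigcup_set0 measure0 esum_set0.
rewrite SE bigcup_image esum_set_image // bigcup_mkcond eseries_mkcond.
set P := pickle @` S in SE einj *.
have mG n : measurable (if n \in P then F (e n) else set0).
  by case: ifPn => // /[!inE] Pn; apply: mF; rewrite SE; exists n.
have mU := bigcupT_measurable _ mG.
apply: le_trans (measure_sigma_subadditive mu mG mU _) _ => //.
apply: lee_nneseries => [n _ _|n _]; first exact: measure_ge0.
by case: ifPn; rewrite ?measure0.
Qed.

End CountableUnion.

Section Levels.
Variable R : realType.
Local Notation p2 l := ((2%:R : R) ^ l).

Lemma exists_p2_lt (L : int) (s : R) : 0 < s -> exists n : nat, p2 (L - n%:Z) < s.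
Proof.
move=> s0; pose n := (Num.truncn (p2 L / s)).+1; exists n.
have Ls : p2 L / s < n%:R.
  by rewrite -truncn_lt_nat ?ltnSn // divr_ge0 // ltW ?p2_gt0.
have n2 : n%:R <= 2%:R ^+ n :> R by rewrite -natrX ler_nat ltnW // ltn_expl.
rewrite expfzDr ?pnatr_eq0 // -invr_expz ltr_pdivrMr ?exprz_gt0 //.
by rewrite -ltr_pdivrMl // mulrC; apply: lt_le_trans n2.
Qed.

Lemma exists_level (L : int) (s : R) : 0 < s -> s <= p2 L ->
  exists2 l, l <= L & p2 (l - 1) < s <= p2 l.
Proof.
move=> s0 sL; have [k ks kmin] := find_ex_minn (exists_p2_lt L s0).
have k0 : (0 < k)%N.
  by move: ks; case: k {kmin} => // /lt_le_trans/(_ sL); rewrite subr0 ltxx.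
exists (L - (k.-1)%:Z); first lia.
have -> : L - (k.-1)%:Z - 1 = L - k%:Z by lia.
rewrite ks /= leNgt; apply/negP => /kmin; lia.
Qed.

End Levels.

Section EReal.
Variable R : realType.
Local Open Scope ereal_scope.

Lemma lee_double_of_half (x : R) (y : \bar R) :
  x%:E * (2^-1)%:E <= y -> x%:E <= y + y.
Proof.
case: y => [y||] /=; last by rewrite -EFinM leeNy_eq.
- by rewrite -EFinM -EFinD !lee_fin; lra.
- by move=> _; exact: leey.
Qed.

Lemma lee_double_mul (Phi : R) (y : \bar R) :
  (2%:R <= Phi)%R -> 0 <= y -> y + y <= Phi%:E * y.
Proof.
move=> Phi2; have Phi0 : (0 < Phi)%R by lra.
case: y => [y||] //= y0; last by rewrite gt0_muley // leey.
by rewrite -EFinM -EFinD lee_fin; move: y0; rewrite lee_fin; nra.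
Qed.

End EReal.

Section CoveringFunction.
Variables (R : realType) (L : int).
Local Notation p2 l := ((2%:R : R) ^ l).
Local Notation dI := (@dyI R).
Local Notation st := (@strip R).
Local Notation lam := (@lebesgue_measure R).

Lemma Qc_cover (A : set (pt R)) : A `<=` YL L -> A `<=` bigstrip (Qc L A).
Proof.
move=> AY p Ap; have [s0 sL] := AY p Ap.
have [l lL /andP[ls sl]] := exists_level s0 sL.
have [m pm] := dyI_exists l p.1.1.
exists (m, l) => //; split=> //; exists p; split=> //; split=> //.
by rewrite /sigma /= -p2_subr1.
Qed.

Lemma Qc_mono (A1 A2 : set (pt R)) : A1 `<=` A2 -> Qc L A1 `<=` Qc L A2.
Proof. by move=> A12 i [Di [p [pi /A12 Ap]]]; split=> //; exists p. Qed.

Lemma sub_Nc (D : set (int * int)) : D `<=` DL L -> D `<=` Nc R L D.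
Proof.
move=> DL_D i Di; split; first exact: DL_D.
rewrite setIidl; last by rewrite proj1set_bigstrip proj1set_strip => x; exists i.
rewrite proj1set_strip lebesgue_measure_dyI -EFinM lee_fin.
by have := @p2_gt0 R i.2; lra.
Qed.

Lemma Nc_mono (D1 D2 : set (int * int)) : D1 `<=` D2 -> Nc R L D1 `<=` Nc R L D2.
Proof.
move=> D12 i [Di hi]; split=> //; apply: le_trans hi _.
have mU D : measurable (proj1set (st i) `&` proj1set (bigstrip D)).
  rewrite proj1set_strip proj1set_bigstrip.
  apply: measurableI; first exact: measurable_dyI.
  by apply: measurable_bigcup_countable => j _; exact: measurable_dyI.
apply: le_measure; rewrite ?inE; [exact: mU | exact: mU |].
apply: setIS => _ [p [j /D12 Dj pj] <-].
by exists p => //; exists j.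
Qed.

Lemma bigstrip_sub_Mc (D1 D2 : set (int * int)) : D2 `<=` DL L -> D1 `<=` D2 ->
  bigstrip (R:=R) D1 `<=` bigstrip (Mc R D2).
Proof.
move=> DL_D2 D12 p [i /D12 D2i pi].
by have [j Mj sij] := Mc_exists_above R DL_D2 D2i; exists j => //; exact: sij.
Qed.

Lemma mu_bigstrip_le (S : set (int * int)) : S `<=` DL L ->
  (mu L (bigstrip S) <= \esum_(i in S) (sigma R i)%:E)%E.
Proof. by move=> DL_S; apply: ereal_inf_lbound; exists S => //; split. Qed.

Lemma sigma_le_Nc (D : set (int * int)) (i : int * int) : Nc R L D i ->
  ((sigma R i)%:E <= lam (dI i.1 i.2 `&` proj1set (bigstrip D))
                     + lam (dI i.1 i.2 `&` proj1set (bigstrip D)))%E.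
Proof.
move=> [_]; rewrite proj1set_strip lebesgue_measure_dyI.
exact: lee_double_of_half.
Qed.

Lemma esum_sigma_Mc_Nc_le (D : set (int * int)) :
  (\esum_(i in Mc R (Nc R L D)) (sigma R i)%:E
     <= lam (proj1set (bigstrip D)) + lam (proj1set (bigstrip D)))%E.
Proof.
set U := proj1set (bigstrip D); set C := Mc R (Nc R L D).
have mU : measurable U.
  rewrite /U proj1set_bigstrip; apply: measurable_bigcup_countable => j _.
  exact: measurable_dyI.
have mI i : measurable (dI i.1 i.2 `&` U).
  by apply: measurableI => //; exact: measurable_dyI.
have disjC : trivIset C (fun i => dI i.1 i.2 `&` U).
  by move=> i j Ci Cj [x [[xi _] [xj _]]]; apply: Mc_dyI_meet_eq Ci Cj _; exists x.
have sumC : (\esum_(i in C) lam (dI i.1 i.2 `&` U) <= lam U)%E.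
  rewrite -(measure_bigcup_countable lam (fun i _ => mI i) disjC).
  apply: le_measure; rewrite ?inE //; last by move=> x [i _ [_ Ux]].
  exact: measurable_bigcup_countable (fun i _ => mI i).
apply: le_trans (leeD sumC sumC); rewrite -esumD; last 2 first.
- by move=> i _; exact: measure_ge0.
- by move=> i _; exact: measure_ge0.
by apply: le_esum => i [Ni _]; exact: sigma_le_Nc.
Qed.

Lemma proj1set_Qc_sub_cover (A : set (pt R)) (S : set (int * int)) :
  A `<=` bigstrip S -> proj1set (bigstrip (Qc L A)) `<=` \bigcup_(k in S) dI k.1 k.2.
Proof.
rewrite proj1set_bigstrip => AS x [j [_ [p [[[pj _] hs] Ap]]] xj].
have [k Sk [pk [_ pk2]]] := AS p Ap.
have jk : j.2 <= k.2.
  have : p2 (j.2 - 1) < p2 k.2 by rewrite p2_subr1; exact: lt_le_trans hs pk2.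
  by rewrite p2_lt; lia.
by exists k => //; exact: dyI_nested jk pj pk _ xj.
Qed.

Lemma lam_proj1set_Qc_le_mu (A : set (pt R)) :
  (lam (proj1set (bigstrip (Qc L A))) <= mu L A)%E.
Proof.
apply/ereal_infP => _ [S [_ AS] <-].
have mS k : S k -> measurable (dI k.1 k.2) by move=> _; exact: measurable_dyI.
have mQ : measurable (proj1set (bigstrip (R:=R) (Qc L A))).
  rewrite proj1set_bigstrip; apply: measurable_bigcup_countable => j _.
  exact: measurable_dyI.
apply: (@le_trans _ _ (lam (\bigcup_(k in S) dI k.1 k.2))).
  apply: le_measure; rewrite ?inE //; last exact: proj1set_Qc_sub_cover.
  exact: measurable_bigcup_countable.
apply: le_trans (measure_bigcup_countable_le lam mS) _.
by apply: le_esum => k _; rewrite /= lebesgue_measure_dyI.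
Qed.

Lemma mu_ge0 (A : set (pt R)) : (0 <= mu L A)%E.
Proof.
apply/ereal_infP => _ [S _ <-]; apply: esum_ge0 => i _.
by rewrite lee_fin ltW ?p2_gt0.
Qed.

Lemma mu_bigstrip_Mc_Nc_Qc_le (Phi : R) (A : set (pt R)) : 2%:R <= Phi ->
  (mu L (bigstrip (Mc R (Nc R L (Qc L A)))) <= Phi%:E * mu L A)%E.
Proof.
move=> Phi2; apply: le_trans (mu_bigstrip_le _) _; first by move=> i [[]].
apply: le_trans (esum_sigma_Mc_Nc_le _) _.
by apply: le_trans (lee_double_mul Phi2 (mu_ge0 A)); apply: leeD;
  exact: lam_proj1set_Qc_le_mu.
Qed.

End CoveringFunction.

Theorem lemma4p5 (R : realType) (L : int) (Phi : R) :
  2%:R <= Phi ->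
  @mu_covering_function R L (fun A : set (pt R) => @Mc R (@Nc R L (@Qc R L A))) Phi.
Proof.
move=> Phi2; have NcDL D : Nc R L D `<=` DL L by move=> i [].
split=> [A AY|A1 A2 _ _ A12]; last first.
  by apply: bigstrip_sub_Mc (NcDL _) _ => i [/(Nc_mono (Qc_mono A12))].
split.
- by move=> i [[]].
- move=> i j Ci Cj nij; rewrite -subset0 => p [[pi _] [pj _]].
  by apply: nij; rewrite (Mc_dyI_meet_eq Ci Cj) //; exists p.1.1.
- apply: subset_trans (Qc_cover AY) _.
  by apply: bigstrip_sub_Mc (NcDL _) _; apply: sub_Nc => i [].
- exact: mu_bigstrip_Mc_Nc_Qc_le.
Qed.
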